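(* For $\varepsilon\in(0,1/2)$, any quantum query algorithm that, given unitary oracles $U_\varphi,U_\psi$ preparing pure states $\ket{\varphi}=U_\varphi\ket{0}$ and $\ket{\psi}=U_\psi\ket{0}$ (with access to their inverses and controlled versions), estimates the trace distance $\mathrm{T}(\ket{\varphi},\ket{\psi})$ to within additive error $\varepsilon$ with probability at least $2/3$ (for all such inputs) has query complexity $\Omega(1/\varepsilon)$.
   Context: For pure states, $\mathrm{T}(\ket{\varphi},\ket{\psi})=\tfrac12\operatorname{tr}\bigl|\ket{\varphi}\bra{\varphi}-\ket{\psi}\bra{\psi}\bigr|=\sqrt{1-|\braket{\varphi}{\psi}|^2}$. Query complexity is the number of applications of the oracles, their inverses, or controlled versions in the algorithm's circuit. *)

From HB Require Import structures.
From mathcomp Require Import all_boot all_order all_algebra.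
From mathcomp Require Import reals.
From mathcomp Require Import complex mxtens.
Set Implicit Arguments. Unset Strict Implicit. Unset Printing Implicit Defensive.
Import Order.TTheory GRing.Theory Num.Theory.
Local Open Scope ring_scope.

Section QueryModel.
Variable R : rcfType.
Local Notation C := R[i].

Definition adjmx m n (A : 'M[C]_(m, n)) : 'M[C]_(n, m) := (map_mx (@conjc R) A)^T.

Definition unitary n (U : 'M[C]_n) : Prop := U *m adjmx U = 1%:M.

Definition ket0 n : 'cV[C]_n := \col_(i < n) (if val i == 0%N then 1 else 0).

Definition abs2 (z : C) : R := complex.Re z ^+ 2 + complex.Im z ^+ 2.

Definition inner_prod d (Uphi Upsi : 'M[C]_d) : C :=
  (adjmx (Uphi *m ket0 d) *m (Upsi *m ket0 d)) 0 0.

Definition trace_dist_pure d (Uphi Upsi : 'M[C]_d) : R :=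
  Num.sqrt (1 - abs2 (inner_prod Uphi Upsi)).

Inductive oracle_kind := Ophi | OphiInv | Opsi | OpsiInv.

Definition oracle_mx d (Uphi Upsi : 'M[C]_d) (o : oracle_kind) : 'M[C]_d :=
  match o with
  | Ophi => Uphi | OphiInv => adjmx Uphi
  | Opsi => Upsi | OpsiInv => adjmx Upsi
  end.

Definition proj2 (c : 'I_2) : 'M[C]_2 := delta_mx c c.

(* A query (c, o) acts on  C^2 (control) (x) C^d (system) (x) C^k (workspace).
   c = true : controlled-O  = |0><0| (x) I + |1><1| (x) O  on the first two factors;
   c = false: plain O on the system register (control qubit untouched). *)
Definition query_mx d k (Uphi Upsi : 'M[C]_d) (q : bool * oracle_kind)
  : 'M[C]_(2 * d * k) :=
  let O := oracle_mx Uphi Upsi q.2 in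
  (if q.1 then proj2 0 *t (1%:M : 'M[C]_d) + proj2 1 *t O
   else (1%:M : 'M[C]_2) *t O) *t (1%:M : 'M[C]_k).

Fixpoint run_state d k (Us : nat -> 'M[C]_(2 * d * k))
    (qs : nat -> bool * oracle_kind) (Uphi Upsi : 'M[C]_d) (t : nat)
    : 'cV[C]_(2 * d * k) :=
  match t with
  | 0 => Us 0%N *m ket0 _
  | t'.+1 => Us t *m (query_mx k Uphi Upsi (qs t') *m
                      run_state Us qs Uphi Upsi t')
  end.

(* Probability that the final computational-basis measurement, post-processed by
   f, yields an estimate within eps of the trace distance. *)
Definition success_prob d k (Us : nat -> 'M[C]_(2 * d * k))
    (qs : nat -> bool * oracle_kind) (f : 'I_(2 * d * k) -> R) (T : nat)
    (eps : R) (Uphi Upsi : 'M[C]_d) : R :=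
  \sum_(x < 2 * d * k | `|f x - trace_dist_pure Uphi Upsi| <= eps)
     abs2 (run_state Us qs Uphi Upsi T x 0).

End QueryModel.

From HB Require Import structures.
From mathcomp Require Import all_boot all_order all_algebra.
From mathcomp Require Import reals.
From mathcomp Require Import complex mxtens perm.
From mathcomp Require Import ring lra.
Set Implicit Arguments. Unset Strict Implicit. Unset Printing Implicit Defensive.
Import Order.TTheory GRing.Theory Num.Theory.
Local Open Scope ring_scope.

(* Hybrid argument.  Compare the instance U_phi = U_psi = 1 (trace distance 0)
   with U_phi = 1, U_psi = W := a + i b K, where K swaps |0> and |1> and
   a = sqrt (1 - b^2): W is unitary and <0|W|0> = a, so the trace distance is b.
   Every oracle O of the second instance is unitary with O + O^* = 2c for some
   a <= c <= 1, hence (1 - O)^* (1 - O) = 2 - 2c, and each (controlled) query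
   moves a state by at most sqrt (2 - 2a) <= 2b: after T queries the final
   states of the two runs are within 2bT.  If the algorithm succeeds on both
   instances and b > 2 eps, the two acceptance regions are disjoint, which
   forces the final states to be at distance at least 1/5.  Hence
   T >= 1 / (10 b), and b = eps (3 - 2 eps) gives T >= 1 / (30 eps). *)

Section Adjoint.
Context {R : rcfType}.
Local Notation C := R[i].

Lemma adjmxM m n p (A : 'M[C]_(m, n)) (B : 'M[C]_(n, p)) :
  adjmx (A *m B) = adjmx B *m adjmx A.
Proof. by rewrite /adjmx map_mxM trmx_mul. Qed.

Lemma adjmxD m n (A B : 'M[C]_(m, n)) : adjmx (A + B) = adjmx A + adjmx B.
Proof. by rewrite /adjmx map_mxD linearD. Qed.

Lemma adjmxB m n (A B : 'M[C]_(m, n)) : adjmx (A - B) = adjmx A - adjmx B.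
Proof. by rewrite /adjmx map_mxB linearB. Qed.

Lemma adjmxZ m n (c : C) (A : 'M[C]_(m, n)) : adjmx (c *: A) = (c^*)%C *: adjmx A.
Proof. by rewrite /adjmx map_mxZ linearZ. Qed.

Lemma adjmx_scalar n (c : C) : adjmx (c%:M : 'M[C]_n) = (c^*)%C%:M.
Proof. by rewrite /adjmx map_scalar_mx tr_scalar_mx. Qed.

Lemma adjmxK m n (A : 'M[C]_(m, n)) : adjmx (adjmx A) = A.
Proof. by apply/matrixP=> i j; rewrite !mxE conjcK. Qed.

Lemma adjmxT m n p q (A : 'M[C]_(m, n)) (B : 'M[C]_(p, q)) :
  adjmx (A *t B) = adjmx A *t adjmx B.
Proof. by rewrite /adjmx map_mxT trmx_tens. Qed.

Lemma tensmxDl m n p q (A B : 'M[C]_(m, n)) (D : 'M[C]_(p, q)) :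
  (A + B) *t D = A *t D + B *t D.
Proof. by apply/matrixP=> i j; rewrite !mxE mulrDl. Qed.

Lemma tensmxBl m n p q (A B : 'M[C]_(m, n)) (D : 'M[C]_(p, q)) :
  (A - B) *t D = A *t D - B *t D.
Proof. by apply/matrixP=> i j; rewrite !mxE mulrBl. Qed.

Lemma tensmxBr m n p q (A : 'M[C]_(m, n)) (B D : 'M[C]_(p, q)) :
  A *t (B - D) = A *t B - A *t D.
Proof. by apply/matrixP=> i j; rewrite !mxE mulrBr. Qed.

Lemma tensmxZl m n p q c (A : 'M[C]_(m, n)) (D : 'M[C]_(p, q)) :
  (c *: A) *t D = c *: (A *t D).
Proof. by apply/matrixP=> i j; rewrite !mxE mulrA. Qed.

Lemma tensmxZr m n p q c (A : 'M[C]_(m, n)) (D : 'M[C]_(p, q)) :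
  A *t (c *: D) = c *: (A *t D).
Proof. by apply/matrixP=> i j; rewrite !mxE mulrCA. Qed.

Lemma tensmx11 m n : (1%:M : 'M[C]_m) *t (1%:M : 'M[C]_n) = 1%:M.
Proof.
apply/matrixP=> i j.
case: (mxtens_indexP i)=> i0 i1; case: (mxtens_indexP j)=> j0 j1.
rewrite tensmxE !mxE -natrM; congr (_%:R).
by rewrite -!val_eqE /= eq_addl_mul ?ltn_ord // xpair_eqE mulnb.
Qed.

Lemma unitary_adjmx_mul n (U : 'M[C]_n) : unitary U -> adjmx U *m U = 1%:M.
Proof. exact: mulmx1C. Qed.

Lemma unitary_adjmx n (U : 'M[C]_n) : unitary U -> unitary (adjmx U).
Proof. by move=> /unitary_adjmx_mul; rewrite /unitary adjmxK. Qed.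

Lemma unitary1 n : unitary (1%:M : 'M[C]_n).
Proof. by rewrite /unitary adjmx_scalar conjc1 mulmx1. Qed.

Lemma unitaryT m n (A : 'M[C]_m) (B : 'M[C]_n) :
  unitary A -> unitary B -> unitary (A *t B).
Proof. by move=> UA UB; rewrite /unitary adjmxT tensmx_mul UA UB tensmx11. Qed.

Definition projector n (P : 'M[C]_n) := adjmx P = P /\ P *m P = P.

Lemma projector1 n : projector (1%:M : 'M[C]_n).
Proof. by rewrite /projector adjmx_scalar conjc1 mulmx1. Qed.

Lemma projectorC n (P : 'M[C]_n) : projector P -> projector (1%:M - P).
Proof.
case=> adjP PP; split; first by rewrite adjmxB adjmx_scalar conjc1 adjP.
by rewrite mulmxBl mul1mx mulmxBr mulmx1 PP subrr subr0.
Qed.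

Lemma projectorT m n (P : 'M[C]_m) (Q : 'M[C]_n) :
  projector P -> projector Q -> projector (P *t Q).
Proof. by case=> adjP PP [adjQ QQ]; rewrite /projector adjmxT tensmx_mul adjP adjQ PP QQ. Qed.

End Adjoint.

Section Norm.
Context {R : rcfType}.
Local Notation C := R[i].

Definition nrm2 N (v : 'cV[C]_N) : R := \sum_i abs2 (v i 0).

Lemma abs2_ge0 (z : C) : 0 <= abs2 z.
Proof. by rewrite addr_ge0 ?sqr_ge0. Qed.

Lemma nrm2_ge0 N (v : 'cV[C]_N) : 0 <= nrm2 v.
Proof. by apply: sumr_ge0 => i _; apply: abs2_ge0. Qed.

Lemma nrm2_mx N (v : 'cV[C]_N) : ((nrm2 v)%:C)%C = (adjmx v *m v) 0 0.
Proof.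
rewrite mxE rmorph_sum; apply: eq_bigr => i _; rewrite !mxE.
by case: (v i 0) => x y; rewrite /abs2 /=; simpc; congr (_ +i* _)%C; ring.
Qed.

Lemma nrm2E N (v : 'cV[C]_N) : nrm2 v = complex.Re ((adjmx v *m v) 0 0).
Proof. by rewrite -nrm2_mx. Qed.

Lemma nrm2_unitary N (U : 'M[C]_N) v : unitary U -> nrm2 (U *m v) = nrm2 v.
Proof.
move=> /unitary_adjmx_mul UU.
by rewrite !nrm2E adjmxM -mulmxA (mulmxA (adjmx U)) UU mul1mx.
Qed.

Lemma nrm2_projector N (P : 'M[C]_N) v :
  projector P -> ((nrm2 (P *m v))%:C)%C = (adjmx v *m (P *m v)) 0 0.
Proof. by case=> adjP PP; rewrite nrm2_mx adjmxM adjP -mulmxA (mulmxA P) PP. Qed.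

Lemma nrm2_projector_le N (P : 'M[C]_N) v : projector P -> nrm2 (P *m v) <= nrm2 v.
Proof.
move=> prP; have prQ := projectorC prP.
suff -> : nrm2 v = nrm2 (P *m v) + nrm2 ((1%:M - P) *m v) by rewrite lerDl nrm2_ge0.
apply: (@complexI R); rewrite rmorphD /= !nrm2_projector // nrm2_mx.
have {2}-> : v = P *m v + (1%:M - P) *m v by rewrite -mulmxDl addrC subrK mul1mx.
by rewrite mulmxDr mxE.
Qed.

Lemma nrm2_scaled_projector N (D Pi : 'M[C]_N) (g : R) (x : 'cV[C]_N) :
  projector Pi -> 0 <= g -> adjmx D *m D = (g%:C)%C *: Pi ->
  nrm2 (D *m x) <= g * nrm2 x.
Proof.
move=> prPi g_ge0 DD.
have -> : nrm2 (D *m x) = g * nrm2 (Pi *m x).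
  apply: (@complexI R); rewrite rmorphM /= (nrm2_projector x prPi) nrm2_mx adjmxM.
  by rewrite -mulmxA (mulmxA (adjmx D)) DD -scalemxAl -scalemxAr mxE.
by rewrite ler_wpM2l // nrm2_projector_le.
Qed.

Definition redot N (u v : 'cV[C]_N) : R :=
  \sum_i (complex.Re (u i 0) * complex.Re (v i 0) + complex.Im (u i 0) * complex.Im (v i 0)).

Lemma nrm2_addZ N (u v : 'cV[C]_N) (t : R) :
  nrm2 (u + (t%:C)%C *: v) = nrm2 u + 2 * t * redot u v + t ^+ 2 * nrm2 v.
Proof.
rewrite /nrm2 /redot !mulr_sumr -!big_split; apply: eq_bigr => i _ /=; rewrite !mxE.
by case: (u i 0) (v i 0) => [a b] [c d]; rewrite /abs2; simpc => /=; ring.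
Qed.

Lemma quadratic_ge0_discr (A B D : R) : 0 <= D ->
  (forall t, 0 <= A + 2 * t * B + t ^+ 2 * D) -> B ^+ 2 <= A * D.
Proof.
move=> D_ge0 h; have [D0|D_neq0] := eqVneq D 0.
  have [B0|B_neq0] := eqVneq B 0; first by rewrite B0 D0 expr0n mulr0.
  have := h (- (A + 1) / (2 * B)); rewrite D0 mulr0 addr0.
  have -> : A + 2 * (- (A + 1) / (2 * B)) * B = -1 by field; rewrite B_neq0.
  lra.
have := h (- B / D).
have -> : A + 2 * (- B / D) * B + (- B / D) ^+ 2 * D = A - B ^+ 2 / D by field.
by rewrite subr_ge0 ler_pdivrMr // lt_def D_neq0.
Qed.

Lemma redot_CauchySchwarz N (u v : 'cV[C]_N) : redot u v ^+ 2 <= nrm2 u * nrm2 v.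
Proof.
apply: quadratic_ge0_discr (nrm2_ge0 v) _ => t.
by rewrite -nrm2_addZ nrm2_ge0.
Qed.

Definition nrm N (v : 'cV[C]_N) : R := Num.sqrt (nrm2 v).

Lemma nrm_ge0 N (v : 'cV[C]_N) : 0 <= nrm v.
Proof. exact: sqrtr_ge0. Qed.

Lemma sqr_nrm N (v : 'cV[C]_N) : nrm v ^+ 2 = nrm2 v.
Proof. by rewrite sqr_sqrtr ?nrm2_ge0. Qed.

Lemma nrmD N (u v : 'cV[C]_N) : nrm (u + v) <= nrm u + nrm v.
Proof.
have CS := redot_CauchySchwarz u v; rewrite -!sqr_nrm -exprMn in CS.
have uv_ge0 : 0 <= nrm u * nrm v by rewrite mulr_ge0 ?nrm_ge0.
have redot_le : redot u v <= nrm u * nrm v by nra.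
have := nrm2_addZ u v 1; rewrite rmorph1 scale1r -!sqr_nrm.
have := nrm_ge0 u; have := nrm_ge0 v; have := nrm_ge0 (u + v); nra.
Qed.

Lemma nrm_unitary N (U : 'M[C]_N) v : unitary U -> nrm (U *m v) = nrm v.
Proof. by move=> UU; rewrite /nrm nrm2_unitary. Qed.

Definition mask N (P : pred 'I_N) (v : 'cV[C]_N) : 'cV[C]_N :=
  \col_i (if P i then v i 0 else 0).

Lemma maskB N (P : pred 'I_N) (u v : 'cV[C]_N) : mask P (u - v) = mask P u - mask P v.
Proof. by apply/colP => i; rewrite !mxE; case: (P i); rewrite ?subr0. Qed.

Lemma nrm2_mask N (P : pred 'I_N) (v : 'cV[C]_N) :
  nrm2 (mask P v) = \sum_(i | P i) abs2 (v i 0).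
Proof.
rewrite /nrm2 [RHS]big_mkcond; apply: eq_bigr => i _; rewrite mxE.
by case: (P i); rewrite // /abs2 expr0n addr0.
Qed.

Lemma nrm2_mask_disjoint N (P Q : pred 'I_N) (v : 'cV[C]_N) : [disjoint P & Q] ->
  nrm2 (mask P v) + nrm2 (mask Q v) <= nrm2 v.
Proof.
move=> PQ; rewrite !nrm2_mask big_mkcond [X in _ + X]big_mkcond -big_split.
apply: ler_sum => i _; have := abs2_ge0 (v i 0).
case Pi: (P i); case Qi: (Q i) => //=; rewrite ?addr0 ?add0r //.
by move: (disjointFr PQ Pi); rewrite unfold_in Qi.
Qed.

Lemma nrm_mask_le N (P : pred 'I_N) (v : 'cV[C]_N) : nrm (mask P v) <= nrm v.
Proof.
have P0 : [disjoint P & pred0] by rewrite disjoint_sym disjoint0.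
rewrite ler_wsqrtr //; apply: le_trans (nrm2_mask_disjoint v P0).
by rewrite lerDl nrm2_ge0.
Qed.

Lemma distinguishing_nrmB_ge N (P Q : pred 'I_N) (v w : 'cV[C]_N) :
  [disjoint P & Q] -> nrm2 w <= 1 ->
  2 / 3 <= nrm2 (mask P v) -> 2 / 3 <= nrm2 (mask Q w) -> 1 / 5 <= nrm (v - w).
Proof.
move=> PQ w_le1 Pv Qw.
have Pw : nrm2 (mask P w) <= 1 / 3 by have := nrm2_mask_disjoint w PQ; lra.
rewrite -!sqr_nrm in Pv Pw.
have Pv_ge : 4 / 5 <= nrm (mask P v) by have := nrm_ge0 (mask P v); nra.
have Pw_le : nrm (mask P w) <= 3 / 5 by have := nrm_ge0 (mask P w); nra.
have := nrm_mask_le P (v - w); rewrite maskB.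
have := nrmD (mask P v - mask P w) (mask P w); rewrite subrK; lra.
Qed.

End Norm.

Section Queries.
Context {R : rcfType}.
Local Notation C := R[i].

Lemma ket0E d (i0 : 'I_d) : val i0 = 0%N -> ket0 R d = delta_mx i0 0.
Proof. by move=> i00; apply/colP => i; rewrite !mxE andbT -val_eqE i00; case: eqP. Qed.

Lemma nrm2_ket0_le1 N : nrm2 (ket0 R N) <= 1.
Proof.
case: N => [|N]; first by rewrite /nrm2 big_ord0.
rewrite (@ket0E _ ord0) // /nrm2 (bigD1 ord0) //= big1 => [|j /negbTE j0].
  by rewrite !mxE eqxx /abs2 /= expr1n expr0n !addr0.
by rewrite !mxE j0 /abs2 /= expr0n addr0.
Qed.

Definition ctrl (c : bool) : 'M[C]_2 := if c then proj2 R 1 else 1%:M.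

Lemma projector_ctrl c : projector (ctrl c).
Proof.
case: c; last exact: projector1.
split; last by rewrite /ctrl /proj2 mul_delta_mx.
by apply/matrixP=> i j; rewrite !mxE andbC rmorph_nat.
Qed.

Lemma proj2_compl : proj2 R 0 = 1%:M - proj2 R 1.
Proof.
apply/eqP; rewrite eq_sym subr_eq; apply/eqP/matrixP=> i j; rewrite !mxE.
by case: i => [[|[|i]] ?] //; case: j => [[|[|j]] ?] //=; rewrite ?addr0 ?add0r.
Qed.

Lemma query_mxE d k (U V : 'M[C]_d) q : query_mx k U V q =
  (ctrl q.1 *t oracle_mx U V q.2 + (1%:M - ctrl q.1) *t 1%:M) *t (1%:M : 'M[C]_k).
Proof.
case: q => [[] o]; rewrite /query_mx /ctrl /=; first by rewrite proj2_compl addrC.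
by rewrite subrr tens0mx addr0.
Qed.

Lemma query_mxB d k (U1 U2 V1 V2 : 'M[C]_d) q :
  query_mx k U1 U2 q - query_mx k V1 V2 q =
  (ctrl q.1 *t (oracle_mx U1 U2 q.2 - oracle_mx V1 V2 q.2)) *t (1%:M : 'M[C]_k).
Proof. by rewrite !query_mxE -tensmxBl tensmxBr opprD addrACA subrr addr0. Qed.

Lemma unitary_ctrl n (P : 'M[C]_2) (O : 'M[C]_n) : projector P -> unitary O ->
  unitary (P *t O + (1%:M - P) *t 1%:M).
Proof.
move=> prP UO; have [adjP PP] := prP; have [adjQ QQ] := projectorC prP.
have PQ : P *m (1%:M - P) = 0 by rewrite mulmxBr mulmx1 PP subrr.
have QP : (1%:M - P) *m P = 0 by rewrite mulmxBl mul1mx PP subrr.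
rewrite /unitary adjmxD !adjmxT adjP adjQ adjmx_scalar conjc1.
rewrite mulmxDl !mulmxDr !tensmx_mul PP PQ QP QQ UO !tens0mx addr0 add0r.
by rewrite !mulmx1 -tensmxDl addrC subrK tensmx11.
Qed.

Lemma unitary_oracle_mx d (U V : 'M[C]_d) o :
  unitary U -> unitary V -> unitary (oracle_mx U V o).
Proof. by case: o => UU UV //=; apply: unitary_adjmx. Qed.

Lemma unitary_query_mx d k (U V : 'M[C]_d) q :
  unitary U -> unitary V -> unitary (query_mx k U V q).
Proof.
move=> UU UV; rewrite query_mxE; apply: unitaryT (unitary1 _).
by apply: unitary_ctrl (projector_ctrl _) _; apply: unitary_oracle_mx.
Qed.

Lemma nrm_ctrl_tens_mul_le d k (P : 'M[C]_2) (E : 'M[C]_d) (g : R)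
    (x : 'cV[C]_(2 * d * k)) :
  projector P -> 0 <= g -> adjmx E *m E = (g%:C)%C%:M ->
  nrm (((P *t E) *t (1%:M : 'M[C]_k)) *m x) <= Num.sqrt g * nrm x.
Proof.
move=> prP g_ge0 EE; have [adjP PP] := prP.
rewrite -sqrtrM // ler_wsqrtr //.
apply: (nrm2_scaled_projector (Pi := (P *t 1%:M) *t 1%:M)) g_ge0 _.
  by apply: projectorT (projector1 _); apply: projectorT prP (projector1 _).
rewrite !adjmxT adjP adjmx_scalar conjc1 !tensmx_mul PP EE mulmx1.
by rewrite -[(g%:C)%C%:M]scalemx1 tensmxZr tensmxZl.
Qed.

Lemma nrm2_run_state_le1 d k (Us : nat -> 'M[C]_(2 * d * k)) qs (U V : 'M[C]_d) T :
  (forall t, (t <= T)%N -> unitary (Us t)) -> unitary U -> unitary V ->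
  forall t, (t <= T)%N -> nrm2 (run_state Us qs U V t) <= 1.
Proof.
move=> UUs UU UV; elim=> [|t IHt] tT /=.
  by rewrite nrm2_unitary; [exact: nrm2_ket0_le1 | exact: UUs].
rewrite nrm2_unitary; last exact: UUs.
rewrite nrm2_unitary; last exact: unitary_query_mx.
exact/IHt/ltnW.
Qed.

Lemma nrm_run_stateB_le d k (Us : nat -> 'M[C]_(2 * d * k)) qs
    (U1 U2 V1 V2 : 'M[C]_d) s T :
  (forall t, (t <= T)%N -> unitary (Us t)) ->
  unitary U1 -> unitary U2 -> unitary V1 -> unitary V2 -> 0 <= s ->
  (forall q x, nrm ((query_mx k U1 U2 q - query_mx k V1 V2 q) *m x) <= s * nrm x) ->
  nrm (run_state Us qs U1 U2 T - run_state Us qs V1 V2 T) <= T%:R * s.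
Proof.
move=> UUs UU1 UU2 UV1 UV2 s_ge0 dev; elim: T UUs => [|t IHt] UUs /=.
  by rewrite subrr mul0r /nrm /nrm2 big1 ?sqrtr0 // => i _; rewrite mxE /abs2 expr0n addr0.
have IH := IHt (fun u ut => UUs u (leqW ut)).
have vV_le1 : nrm (run_state Us qs V1 V2 t) <= 1.
  by rewrite -sqrtr1 ler_wsqrtr // (nrm2_run_state_le1 qs UUs UV1 UV2 (leqnSn t)).
rewrite -mulmxBr nrm_unitary; last exact: UUs.
set vU := run_state _ _ U1 U2 t; set vV := run_state _ _ V1 V2 t.
set QU := query_mx k U1 U2 (qs t); set QV := query_mx k V1 V2 (qs t).
have -> : QU *m vU - QV *m vV = QU *m (vU - vV) + (QU - QV) *m vV.
  by rewrite mulmxBr mulmxBl addrA subrK.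
apply: le_trans (nrmD _ _) _; rewrite nrm_unitary; last exact: unitary_query_mx.
have := dev (qs t) vV; rewrite -natr1 mulrDl mul1r; nra.
Qed.

Lemma success_probE d k (Us : nat -> 'M[C]_(2 * d * k)) qs f T eps (U V : 'M[C]_d) :
  success_prob Us qs f T eps U V =
  nrm2 (mask [pred x | `|f x - trace_dist_pure U V| <= eps] (run_state Us qs U V T)).
Proof. by rewrite nrm2_mask. Qed.

End Queries.

Section Rotation.
Context {R : rcfType}.
Local Notation C := R[i].
Variables (d : nat) (K : 'M[C]_d).
Hypotheses (adjK : adjmx K = K) (KK : K *m K = 1%:M).

(* [exp (i theta K)] for [a = cos theta], [b = sin theta]. *)
Definition rotmx (a b : R) : 'M[C]_d := (a%:C)%C%:M + (b *i)%C *: K.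

Lemma adjmx_rotmx a b : adjmx (rotmx a b) = rotmx a (- b).
Proof. by rewrite adjmxD adjmx_scalar adjmxZ adjK conjc_real. Qed.

Lemma rotmx_adj_add a b : rotmx a b + adjmx (rotmx a b) = ((2 * a)%:C)%C%:M.
Proof.
rewrite adjmx_rotmx /rotmx addrACA -scalerDl.
have -> : ((b *i) + ((- b) *i) = 0)%C by apply/eqP; simpc.
by rewrite scale0r addr0 -raddfD /= -rmorphD mulr2n mulrDl mul1r.
Qed.

Lemma unitary_rotmx a b : a ^+ 2 + b ^+ 2 = 1 -> unitary (rotmx a b).
Proof.
move=> ab1; rewrite /unitary adjmx_rotmx /rotmx mulmxDl !mulmxDr -scalar_mxM.
rewrite mul_scalar_mx mul_mx_scalar -scalemxAl -scalemxAr KK !scalerA.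
apply/matrixP => i j; rewrite !mxE; case: (K i j) => x y.
by case: (i == j); simpc; congr (_ +i* _)%C; nra.
Qed.

End Rotation.

Section HardInstance.
Context {R : rcfType}.
Local Notation C := R[i].

Lemma adjmx_tperm_mx d (i j : 'I_d) : adjmx (tperm_mx i j : 'M[C]_d) = tperm_mx i j.
Proof. by rewrite /adjmx map_tperm_mx tr_tperm_mx. Qed.

Lemma tperm_mxK d (i j : 'I_d) : (tperm_mx i j : 'M[C]_d) *m tperm_mx i j = 1%:M.
Proof. by rewrite -perm_mxM tperm2 perm_mx1. Qed.

Lemma tperm_mx_diag d (i j : 'I_d) : i != j -> (tperm_mx i j : 'M[C]_d) i i = 0.
Proof. by move=> ij; rewrite !mxE tpermL eq_sym (negbTE ij). Qed.

Lemma inner_prod_1mx d (M : 'M[C]_d) (i0 : 'I_d) : val i0 = 0%N ->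
  inner_prod 1%:M M = M i0 i0.
Proof.
move=> i00; rewrite /inner_prod mul1mx (ket0E i00) /adjmx map_delta_mx trmx_delta.
by rewrite -colE -rowE !mxE.
Qed.

Lemma trace_dist_pure_11 d : (0 < d)%N -> trace_dist_pure (1%:M : 'M[C]_d) 1%:M = 0.
Proof.
move=> d_gt0; rewrite /trace_dist_pure (@inner_prod_1mx _ _ (Ordinal d_gt0)) //.
by rewrite mxE eqxx /abs2 /= expr1n expr0n addr0 subrr sqrtr0.
Qed.

Lemma trace_dist_pure_1rotmx d (K : 'M[C]_d) (i0 : 'I_d) a b :
  val i0 = 0%N -> K i0 i0 = 0 -> 0 <= b -> a ^+ 2 + b ^+ 2 = 1 ->
  trace_dist_pure 1%:M (rotmx K a b) = b.
Proof.
move=> i00 K00 b_ge0 ab1; rewrite /trace_dist_pure (inner_prod_1mx _ i00) !mxE K00.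
rewrite eqxx mulr0 addr0 mulr1n /abs2 /= expr0n addr0.
by rewrite (_ : 1 - a ^+ 2 = b ^+ 2) ?sqrtr_sqr ?ger0_norm //; lra.
Qed.

Lemma oracle_mx11 d o : oracle_mx (1%:M : 'M[C]_d) 1%:M o = 1%:M.
Proof. by case: o; rewrite //= adjmx_scalar conjc1. Qed.

Lemma oracle_mx_adj_add d (W : 'M[C]_d) a o : a <= 1 ->
  W + adjmx W = ((2 * a)%:C)%C%:M ->
  exists2 c, a <= c <= 1 &
    oracle_mx 1%:M W o + adjmx (oracle_mx 1%:M W o) = ((2 * c)%:C)%C%:M.
Proof.
move=> a_le1 WadjW.
case: o => /=; [exists 1 | exists 1 | exists a | exists a]; rewrite ?lexx ?a_le1 //.
- by rewrite adjmx_scalar conjc1 -raddfD /= mulr1 rmorph_nat.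
- by rewrite !adjmx_scalar !conjc1 -raddfD /= mulr1 rmorph_nat.
- by rewrite adjmxK addrC.
Qed.

Lemma adjmx1B_mul d (O : 'M[C]_d) (c : R) : unitary O ->
  O + adjmx O = ((2 * c)%:C)%C%:M ->
  adjmx (1%:M - O) *m (1%:M - O) = ((2 - 2 * c)%:C)%C%:M.
Proof.
move=> /unitary_adjmx_mul OO OadjO.
rewrite adjmxB adjmx_scalar conjc1 mulmxBl !mulmxBr OO !mulmx1 mul1mx.
have -> : 1%:M - O - (adjmx O - 1%:M) = 1%:M + 1%:M - (O + adjmx O) :> 'M[C]_d.
  by rewrite opprB opprD addrACA.
by rewrite OadjO -!raddfD -raddfB /=; congr (_%:M); rewrite rmorphB.
Qed.

Lemma rotation_instance d k (b : R) : (1 < d)%N -> 0 <= b <= 1 ->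
  exists W : 'M[C]_d, [/\ unitary W, trace_dist_pure 1%:M W = b &
    forall q (x : 'cV[C]_(2 * d * k)),
      nrm ((query_mx k 1%:M 1%:M q - query_mx k 1%:M W q) *m x) <= 2 * b * nrm x].
Proof.
move=> d_gt1 /andP[b_ge0 b_le1].
pose i0 : 'I_d := Ordinal (ltnW d_gt1); pose i1 : 'I_d := Ordinal d_gt1.
have adjK := adjmx_tperm_mx i0 i1; have KK := tperm_mxK i0 i1.
have K00 : (tperm_mx i0 i1 : 'M[C]_d) i0 i0 = 0 by apply: tperm_mx_diag; rewrite -val_eqE.
pose a := Num.sqrt (1 - b ^+ 2).
have a_ge0 : 0 <= a := sqrtr_ge0 _.
have a2 : a ^+ 2 = 1 - b ^+ 2 by rewrite sqr_sqrtr //; nra.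
have ab1 : a ^+ 2 + b ^+ 2 = 1 by rewrite a2 subrK.
have a_le1 : a <= 1 by nra.
have UW := unitary_rotmx adjK KK ab1.
exists (rotmx (tperm_mx i0 i1) a b); split => //.
  exact: (trace_dist_pure_1rotmx (i0 := i0)).
move=> q x; have [c /andP[a_le_c c_le1] Oc] := oracle_mx_adj_add q.2 a_le1 (rotmx_adj_add adjK a b).
have dev := adjmx1B_mul (unitary_oracle_mx q.2 (unitary1 _) UW) Oc.
rewrite query_mxB oracle_mx11.
apply: le_trans (nrm_ctrl_tens_mul_le x (projector_ctrl q.1) _ dev) _; first lra.
rewrite ler_wpM2r ?nrm_ge0 //.
have c2 : Num.sqrt (2 - 2 * c) ^+ 2 = 2 - 2 * c by rewrite sqr_sqrtr //; lra.
have := sqrtr_ge0 (2 - 2 * c); nra.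
Qed.

End HardInstance.

Lemma query_lower_bound {R : rcfType} d k (Us : nat -> 'M[R[i]]_(2 * d * k)) qs f T
    (eps b : R) :
  (1 < d)%N -> 0 <= b <= 1 -> 2 * eps < b ->
  (forall t, (t <= T)%N -> unitary (Us t)) ->
  (forall U V : 'M[R[i]]_d, unitary U -> unitary V ->
     2 / 3 <= success_prob Us qs f T eps U V) ->
  1 <= 10 * T%:R * b.
Proof.
move=> d_gt1 b_range eps_b UUs success; have b_ge0 : 0 <= b by case/andP: b_range.
have [W [UW tdW dev]] := rotation_instance k d_gt1 b_range.
have unitary1d := @unitary1 R d; have two_b_ge0 : 0 <= 2 * b by lra.
have close := nrm_run_stateB_le qs UUs unitary1d unitary1d unitary1d UW two_b_ge0 dev.
have far : 1 / 5 <= nrm (run_state Us qs 1%:M 1%:M T - run_state Us qs 1%:M W T).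
  apply: (distinguishing_nrmB_ge (P := [pred x | `|f x - 0| <= eps])
                                 (Q := [pred x | `|f x - b| <= eps])).
  - apply/pred0P => x /=; apply/negbTE/negP => /andP[].
    by rewrite !inE subr0 !ler_norml => /andP[? ?] /andP[? ?]; lra.
  - exact: (nrm2_run_state_le1 qs UUs unitary1d UW (leqnn T)).
  - by rewrite -(trace_dist_pure_11 (ltnW d_gt1)) -success_probE; apply: success.
  - by rewrite -tdW -success_probE; apply: success.
nra.
Qed.

Theorem theorem5p2 (R : realType) :
  exists c : R, 0 < c /\
  forall (n : nat) (eps : R), (0 < n)%N -> 0 < eps -> eps < 1 / 2 ->
  forall (k T : nat) (Us : nat -> 'M[R[i]]_(2 * 2 ^ n * k))
         (qs : nat -> bool * oracle_kind) (f : 'I_(2 * 2 ^ n * k) -> R),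
    (forall t, (t <= T)%N -> unitary (Us t)) ->
    (forall Uphi Upsi : 'M[R[i]]_(2 ^ n), unitary Uphi -> unitary Upsi ->
       2 / 3 <= success_prob Us qs f T eps Uphi Upsi) ->
    c / eps <= T%:R.
Proof.
exists (1 / 30); split => [|n eps n_gt0 eps_gt0 eps_lt k T Us qs f UUs success]; first lra.
have d_gt1 : (1 < 2 ^ n)%N by rewrite -[1%N]/(2 ^ 0)%N ltn_exp2l.
have b_range : 0 <= eps * (3 - 2 * eps) <= 1 by apply/andP; split; nra.
have eps_b : 2 * eps < eps * (3 - 2 * eps) by nra.
have := query_lower_bound d_gt1 b_range eps_b UUs success.
rewrite ler_pdivrMr // => bound.
have Teps_ge0 : 0 <= T%:R * eps by rewrite mulr_ge0 ?ler0n ?ltW.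
nra.
Qed.
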